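(* Let $a>1$, $d\ge 4$, and let $G$ be generated by the security model $\mathcal{S}(n,a,d)$. Let $T_1=\log^{a+1} n$ and let $C_t$ be the set of colors appearing in $G_t$ (the graph at the end of time step $t$). Then with probability $1-o(1)$, for all $t$ with $T_1\le t\le n$, $$\frac{t}{2\log^a t}\le |C_t|\le \frac{2t}{\log^a t}.$$
   Context: Security model $\mathcal{S}(n,a,d)$ (homophyly exponent $a$, natural number $d$): start with an initial graph $G_2$ on two nodes, each of which is a seed node with its own distinct color. For $i=3,\dots,n$, given $G_{i-1}$, let $p_i=(\log i)^{-a}$ and create a new node $v$. With probability $p_i$, $v$ receives a brand-new color $c$ and is called the seed node of $c$; then one edge $(v,u)$ is added with $u$ chosen with probability proportional to degrees in $G_{i-1}$, and $d-1$ edges $(v,u_j)$ are added, each $u_j$ chosen uniformly at random among all seed nodes of $G_{i-1}$. Otherwise, $v$ picks a color $c$ uniformly at random among all colors present in $G_{i-1}$, takes color $c$, and $d$ edges $(v,u_j)$ are added, each $u_j$ chosen with probability proportional to degree among the nodes of color $c$ in $G_{i-1}$. The network is $G=G_n$, and step $i$ is the step creating the $i$-th node. *)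

From Stdlib Require Import Reals Lra List Arith.
Import ListNotations.
Open Scope R_scope.

Definition dist (A : Type) := list (R * A).

Definition dret {A} (x : A) : dist A := [(1, x)].

Definition dbind {A B} (m : dist A) (f : A -> dist B) : dist B :=
  flat_map (fun px => map (fun qy => (fst px * fst qy, snd qy)) (f (snd px))) m.

Definition dflip (p : R) : dist bool := [(p, true); (1 - p, false)].

Definition duniform {A} (l : list A) : dist A :=
  map (fun x => (/ INR (length l), x)) l.

Definition dweighted {A} (w : A -> nat) (l : list A) : dist A :=
  let W := fold_right (fun x s => (w x + s)%nat) 0%nat l in
  map (fun x => (INR (w x) / INR W, x)) l.

Fixpoint dreplicate {A} (k : nat) (m : dist A) : dist (list A) :=
  match k with
  | O => dret []
  | S k' => dbind m (fun x => dbind (dreplicate k' m) (fun xs => dret (x :: xs)))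
  end.

Definition dprob {A} (m : dist A) (P : A -> bool) : R :=
  fold_right (fun px s => (if P (snd px) then fst px else 0) + s) 0 m.

(* Nodes are 0, 1, ..., (length cols - 1); node k is the (k+1)-th node.
   cols k = colour of node k, seeds k = whether node k is a seed node,
   edges = multiset of (undirected) edges, ncol = number of colours created
   so far (colours are 0 .. ncol-1). *)
Record graph := mkGraph {
  cols : list nat;
  seeds : list bool;
  edges : list (nat * nat);
  ncol : nat }.

Definition nodes (g : graph) : list nat := seq 0 (length (cols g)).

Definition degree (g : graph) (u : nat) : nat :=
  length (filter (fun e => orb (Nat.eqb (fst e) u) (Nat.eqb (snd e) u)) (edges g)).

Definition seed_nodes (g : graph) : list nat :=
  filter (fun u => nth u (seeds g) false) (nodes g).

Definition color_nodes (g : graph) (c : nat) : list nat :=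
  filter (fun u => Nat.eqb (nth u (cols g) 0%nat) c) (nodes g).

Definition colors (g : graph) : list nat := nodup Nat.eq_dec (cols g).
Definition ncolors (g : graph) : nat := length (colors g).

Definition G2 : graph := mkGraph [0%nat; 1%nat] [true; true] [(0%nat, 1%nat)] 2.

Definition p_new (a : R) (i : nat) : R := Rpower (ln (INR i)) (- a).

(* step i: from G_{i-1} to G_i *)
Definition step (a : R) (d : nat) (i : nat) (g : graph) : dist graph :=
  let v := length (cols g) in
  dbind (dflip (p_new a i)) (fun b =>
    if b then
      dbind (dweighted (degree g) (nodes g)) (fun u =>
      dbind (dreplicate (d - 1) (duniform (seed_nodes g))) (fun us =>
      dret (mkGraph (cols g ++ [ncol g]) (seeds g ++ [true])
                    (edges g ++ map (fun w => (v, w)) (u :: us)) (S (ncol g)))))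
    else
      dbind (duniform (seq 0 (ncol g))) (fun c =>
      dbind (dreplicate d (dweighted (degree g) (color_nodes g c))) (fun us =>
      dret (mkGraph (cols g ++ [c]) (seeds g ++ [false])
                    (edges g ++ map (fun w => (v, w)) us) (ncol g))))).

(* run m : distribution of the history [G_{m+2}; G_{m+1}; ...; G_2] *)
Fixpoint run (a : R) (d : nat) (m : nat) : dist (list graph) :=
  match m with
  | O => dret [G2]
  | S m' => dbind (run a d m') (fun h =>
      match h with
      | g :: _ => dbind (step a d (m' + 3) g) (fun g' => dret (g' :: h))
      | [] => dret []
      end)
  end.

Definition history (a : R) (d n : nat) : dist (list graph) := run a d (n - 2).

(* G_t extracted from the history [G_n; ...; G_2] (for 2 <= t <= n) *)
Definition G_at (n : nat) (h : list graph) (t : nat) : graph := nth (n - t) h G2.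

Definition Rleb (x y : R) : bool := if Rle_dec x y then true else false.

Definition color_bound_event (a : R) (n : nat) (h : list graph) : bool :=
  forallb (fun t =>
     orb (negb (Rleb (Rpower (ln (INR n)) (a + 1)) (INR t)))
     (andb (Rleb (INR t / (2 * Rpower (ln (INR t)) a)) (INR (ncolors (G_at n h t))))
           (Rleb (INR (ncolors (G_at n h t))) (2 * INR t / Rpower (ln (INR t)) a))))
   (seq 2 (n - 1)).

(* In every outcome of the model the number of colours of G_t equals the colour counter, which
   grows by one at step i with probability p_i = log^{-a} i whatever edges are drawn.  For large t the mean mu_t lies between t / log^a t and
   (8/5) t / log^a t and the variance is at most mu_t, so Markov's inequality for the fourth
   central moment bounds the probability that |C_t| leaves [t / (2 log^a t), 2 t / log^a t]
   by O(mu_t^{-2}) = O(t^{-3/2}).  A union bound over t >= T_1 gives a failure probability of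
   O(T_1^{-1/2}), which tends to 0 since T_1 = log^{a+1} n does. *)

From Pilot Require Import Defs.
From Stdlib Require Import Reals List.
Open Scope R_scope.
From Stdlib Require Import Lra Lia Permutation.
Import ListNotations.

(* [Defs.dist] is qualified because [Reals] exports a metric-space [dist]. *)
Definition expect {A} (m : Defs.dist A) (F : A -> R) : R :=
  fold_right (fun px s => fst px * F (snd px) + s) 0 m.

Definition mass {A} (m : Defs.dist A) : R := expect m (fun _ => 1).

Definition nonneg {A} (m : Defs.dist A) : Prop := forall p x, In (p, x) m -> 0 <= p.

Definition sumR {X} (f : X -> R) (l : list X) : R := fold_right (fun x s => f x + s) 0 l.

Lemma sumR_le {X} (f g : X -> R) l :
  (forall x, In x l -> f x <= g x) -> sumR f l <= sumR g l.
Proof.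
  induction l as [|x l IH]; simpl; intros H; [lra|].
  assert (f x <= g x) by auto.
  assert (sumR f l <= sumR g l) by (apply IH; auto).
  lra.
Qed.

Lemma eq_sumR {X} (f g : X -> R) l : (forall x, f x = g x) -> sumR f l = sumR g l.
Proof. intros H; induction l as [|x l IH]; simpl; [reflexivity|]. now rewrite H, IH. Qed.

Lemma sumR_const {X} c (l : list X) : sumR (fun _ => c) l = INR (length l) * c.
Proof.
  induction l as [|x l IH]; simpl sumR; [simpl; ring|].
  rewrite IH; cbn [length]; rewrite S_INR; ring.
Qed.

Lemma sumR_nonneg {X} (f : X -> R) l : (forall x, In x l -> 0 <= f x) -> 0 <= sumR f l.
Proof.
  intros H. apply Rle_trans with (sumR (fun _ => 0) l); [|now apply sumR_le].
  rewrite sumR_const; lra.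
Qed.

Lemma sumR_scal {X} c (f : X -> R) l : sumR (fun x => c * f x) l = c * sumR f l.
Proof. induction l as [|x l IH]; simpl; [ring|]. rewrite IH; ring. Qed.

Lemma INR_fold_add {X} (w : X -> nat) l :
  INR (fold_right (fun x s => (w x + s)%nat) 0%nat l) = sumR (fun x => INR (w x)) l.
Proof. induction l as [|x l IH]; simpl; [reflexivity|]. now rewrite plus_INR, IH. Qed.

Lemma eq_forallb {X} (f g : X -> bool) l : (forall x, f x = g x) -> forallb f l = forallb g l.
Proof. intros H; induction l as [|x l IH]; simpl; [reflexivity|]. now rewrite H, IH. Qed.

Lemma dprob_expect {A} (m : Defs.dist A) P :
  dprob m P = expect m (fun x => if P x then 1 else 0).
Proof.
  induction m as [|[p x] m IH]; simpl; [reflexivity|].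
  rewrite IH; destruct (P x); ring.
Qed.

Lemma expect_app {A} (m1 m2 : Defs.dist A) F : expect (m1 ++ m2) F = expect m1 F + expect m2 F.
Proof. induction m1 as [|[p x] m IH]; simpl; [ring|]. rewrite IH; ring. Qed.

Lemma expect_dbind {A B} (m : Defs.dist A) (f : A -> Defs.dist B) F :
  expect (dbind m f) F = expect m (fun x => expect (f x) F).
Proof.
  assert (Hscale : forall c (l : Defs.dist B),
    expect (map (fun qy => (c * fst qy, snd qy)) l) F = c * expect l F).
  { induction l as [|[q y] l IH]; simpl; [ring|]. rewrite IH; ring. }
  unfold dbind. induction m as [|[p x] m IH]; simpl; [reflexivity|].
  rewrite expect_app, IH, Hscale. reflexivity.
Qed.

Lemma expect_dret {A} (x : A) F : expect (dret x) F = F x.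
Proof. unfold dret; simpl; ring. Qed.

Lemma eq_expect {A} (m : Defs.dist A) F G :
  (forall p x, In (p, x) m -> F x = G x) -> expect m F = expect m G.
Proof.
  induction m as [|[p x] m IH]; simpl; intros H; [reflexivity|].
  rewrite (H p x (or_introl eq_refl)), IH; [reflexivity|].
  intros; eapply H; right; eauto.
Qed.

Lemma expect_le {A} (m : Defs.dist A) F G : nonneg m ->
  (forall p x, In (p, x) m -> F x <= G x) -> expect m F <= expect m G.
Proof.
  induction m as [|[p x] m IH]; simpl; intros Hm H; [lra|].
  assert (0 <= p) by (apply (Hm p x); left; auto).
  assert (F x <= G x) by (apply (H p x); left; auto).
  assert (expect m F <= expect m G).
  { apply IH; [intros q y Hq; eapply Hm; right; eauto | intros; eapply H; right; eauto]. }
  nra.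
Qed.

Lemma expect_add {A} (m : Defs.dist A) F G :
  expect m (fun x => F x + G x) = expect m F + expect m G.
Proof. induction m as [|[p x] m IH]; simpl; [ring|]. rewrite IH; ring. Qed.

Lemma expect_scal {A} (m : Defs.dist A) c F : expect m (fun x => c * F x) = c * expect m F.
Proof. induction m as [|[p x] m IH]; simpl; [ring|]. rewrite IH; ring. Qed.

Lemma expect_const {A} (m : Defs.dist A) c : expect m (fun _ => c) = c * mass m.
Proof. unfold mass; rewrite <- expect_scal. apply eq_expect; intros; ring. Qed.

Lemma expect_sumR {A T} (m : Defs.dist A) (H : T -> A -> R) ts :
  expect m (fun x => sumR (fun t => H t x) ts) = sumR (fun t => expect m (H t)) ts.
Proof.
  induction ts as [|t ts IH]; simpl.
  - rewrite expect_const; ring.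
  - rewrite expect_add, IH; reflexivity.
Qed.

Lemma in_dbind {A B} (m : Defs.dist A) (f : A -> Defs.dist B) p y :
  In (p, y) (dbind m f) -> exists q x r, In (q, x) m /\ In (r, y) (f x) /\ p = q * r.
Proof.
  unfold dbind. intros H. apply in_flat_map in H as [[q x] [Hm Hy]].
  apply in_map_iff in Hy as [[r z] [E Hz]]. simpl in E. inversion E; subst.
  exists q, x, r. auto.
Qed.

Lemma in_dret {A} (x : A) p y : In (p, y) (dret x) -> y = x.
Proof. intros [H|[]]. now inversion H. Qed.

Lemma in_duniform {A} (l : list A) p x : In (p, x) (duniform l) -> In x l.
Proof. unfold duniform. intros H. apply in_map_iff in H as [y [E Hy]]. now inversion E; subst. Qed.

Lemma nonneg_dbind {A B} (m : Defs.dist A) (f : A -> Defs.dist B) : nonneg m ->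
  (forall q x, In (q, x) m -> nonneg (f x)) -> nonneg (dbind m f).
Proof.
  intros Hm Hf p y H. apply in_dbind in H as (q & x & r & H1 & H2 & ->).
  apply Rmult_le_pos; [eapply Hm | eapply Hf]; eauto.
Qed.

Lemma nonneg_dret {A} (x : A) : nonneg (dret x).
Proof. intros p y [H|[]]. inversion H; lra. Qed.

Lemma nonneg_dflip p : 0 <= p <= 1 -> nonneg (dflip p).
Proof. intros Hp q x [H|[H|[]]]; inversion H; lra. Qed.

Lemma mass_dbind {A B} (m : Defs.dist A) (f : A -> Defs.dist B) :
  mass m = 1 -> (forall q x, In (q, x) m -> mass (f x) = 1) -> mass (dbind m f) = 1.
Proof.
  intros Hm Hf. unfold mass at 1. rewrite expect_dbind.
  rewrite (eq_expect _ _ (fun _ => 1)); [exact Hm|]. intros; eapply Hf; eauto.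
Qed.

Lemma mass_dret {A} (x : A) : mass (dret x) = 1.
Proof. unfold mass; now rewrite expect_dret. Qed.

Lemma mass_map_weight {A} (w : A -> R) l : mass (map (fun x => (w x, x)) l) = sumR w l.
Proof.
  unfold mass, expect, sumR; induction l as [|x l IH]; simpl; [reflexivity|].
  rewrite IH; ring.
Qed.

Lemma mass_duniform {A} (l : list A) : l <> [] -> mass (duniform l) = 1.
Proof.
  intros Hl. unfold duniform. rewrite mass_map_weight, sumR_const.
  apply Rinv_r, not_0_INR. destruct l; [congruence | discriminate].
Qed.

Lemma mass_dweighted {A} (w : A -> nat) (l : list A) :
  fold_right (fun x s => (w x + s)%nat) 0%nat l <> 0%nat -> mass (dweighted w l) = 1.
Proof.
  intros Hl. unfold dweighted. rewrite mass_map_weight.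
  rewrite (eq_sumR _ (fun x => / INR _ * INR (w x))) by (intros; unfold Rdiv; ring).
  rewrite sumR_scal, <- INR_fold_add. now apply Rinv_l, not_0_INR.
Qed.

Lemma mass_dreplicate {A} k (m : Defs.dist A) : mass m = 1 -> mass (dreplicate k m) = 1.
Proof.
  intros Hm. induction k; cbn [dreplicate]; [apply mass_dret|].
  apply mass_dbind; auto. intros. apply mass_dbind; auto. intros; apply mass_dret.
Qed.

Lemma indicator_forallb_ge {T} (f : T -> bool) ts :
  1 - sumR (fun t => if f t then 0 else 1) ts <= (if forallb f ts then 1 else 0).
Proof.
  induction ts as [|t ts IH]; simpl; [lra|].
  assert (0 <= sumR (fun t => if f t then 0 else 1) ts).
  { apply sumR_nonneg; intros u _; destruct (f u); lra. }
  destruct (f t); simpl; lra.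
Qed.

Lemma union_bound {A T} (m : Defs.dist A) (good : T -> A -> bool) ts :
  nonneg m -> mass m = 1 ->
  1 - sumR (fun t => dprob m (fun x => negb (good t x))) ts
  <= dprob m (fun x => forallb (fun t => good t x) ts).
Proof.
  intros Hm Hmass. rewrite dprob_expect.
  eapply Rle_trans;
    [|apply expect_le; [exact Hm | intros p x _; apply (indicator_forallb_ge (fun t => good t x))]].
  rewrite (eq_expect _ _ (fun x => 1 + -1 * sumR (fun t => if good t x then 0 else 1) ts))
    by (intros; ring).
  rewrite expect_add, expect_const, Hmass, expect_scal, expect_sumR.
  rewrite (eq_sumR (fun t => dprob m _) (fun t => expect m (fun x => if good t x then 0 else 1))).
  - lra.
  - intros t. rewrite dprob_expect. apply eq_expect; intros. now destruct (good t _).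
Qed.

Lemma dprob_false {A} (m : Defs.dist A) : dprob m (fun _ => false) = 0.
Proof. unfold dprob; induction m as [|px m IH]; simpl; [reflexivity | rewrite IH; ring]. Qed.

Lemma dprob_mono {A} (m : Defs.dist A) (P Q : A -> bool) : nonneg m ->
  (forall x, P x = true -> Q x = true) -> dprob m P <= dprob m Q.
Proof.
  intros Hm H. rewrite !dprob_expect. apply expect_le; [exact Hm|].
  intros q x _. destruct (P x) eqn:E; [rewrite (H x E)|destruct (Q x)]; lra.
Qed.

Lemma Rleb_spec x y : Rleb x y = true <-> x <= y.
Proof. unfold Rleb; destruct (Rle_dec x y); split; auto; discriminate. Qed.

Lemma pow4_abs x : Rabs x ^ 4 = x ^ 4.
Proof.
  replace (Rabs x ^ 4) with ((Rabs x ^ 2) ^ 2) by ring.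
  rewrite pow2_abs. ring.
Qed.

Lemma markov_pow4 {A} (m : Defs.dist A) (F : A -> R) lam : nonneg m -> 0 < lam ->
  dprob m (fun x => Rleb lam (Rabs (F x))) <= expect m (fun x => F x ^ 4) / lam ^ 4.
Proof.
  intros Hm Hl. assert (Hl4 : 0 < lam ^ 4) by (apply pow_lt; lra).
  rewrite dprob_expect; unfold Rdiv; rewrite Rmult_comm, <- expect_scal.
  apply expect_le; [exact Hm|].
  intros q x _. assert (HF4 : 0 <= F x ^ 4) by (rewrite <- pow4_abs; apply pow_le, Rabs_pos).
  destruct (Rleb lam (Rabs (F x))) eqn:E.
  - apply Rleb_spec in E. rewrite <- (pow4_abs (F x)).
    pose proof (pow_incr lam (Rabs (F x)) 4 ltac:(lra)).
    apply (Rmult_le_reg_l (lam ^ 4)); [exact Hl4|].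
    rewrite <- Rmult_assoc, Rinv_r by lra. lra.
  - apply Rmult_le_pos; [left; now apply Rinv_0_lt_compat | exact HF4].
Qed.

(** * Colour counts in the security model *)

(* The colours of a reachable graph are exactly [0 .. ncol g - 1], and every colour has a
   node of positive degree, so that every weighted choice made by [step] is well defined. *)
Definition wf_graph (g : graph) : Prop :=
  (exists s, seeds g = true :: s) /\ cols g <> [] /\ (0 < ncol g)%nat /\
  (forall c, (c < ncol g)%nat -> exists u, In u (color_nodes g c) /\ (0 < degree g u)%nat) /\
  (forall x, In x (cols g) <-> (x < ncol g)%nat).

Lemma wf_G2 : wf_graph G2.
Proof.
  split; [exists [true]; reflexivity|]. split; [discriminate|]. split; [simpl; lia|]. split.
  - intros c Hc. simpl in Hc. destruct c as [|[|c]]; [| | lia].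
    + exists 0%nat. split; [simpl; auto | cbv; lia].
    + exists 1%nat. split; [simpl; auto | cbv; lia].
  - intros x; simpl. split; [intros [<-|[<-|[]]]; lia | lia].
Qed.

Lemma ncolors_wf g : wf_graph g -> ncolors g = ncol g.
Proof.
  intros [_ [_ [_ [_ Hcol]]]]. unfold ncolors, colors.
  assert (P : Permutation (nodup Nat.eq_dec (cols g)) (seq 0 (ncol g))).
  { apply NoDup_Permutation; [apply NoDup_nodup | apply seq_NoDup |].
    intros x. rewrite nodup_In, Hcol, in_seq. lia. }
  now rewrite (Permutation_length P), length_seq.
Qed.

Lemma weight_sum_neq0 {A} (w : A -> nat) l u : In u l -> (0 < w u)%nat ->
  fold_right (fun x s => (w x + s)%nat) 0%nat l <> 0%nat.
Proof.
  induction l as [|y l IH]; simpl; [tauto|]. intros [->|H] Hw; [lia|].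
  specialize (IH H Hw). lia.
Qed.

Lemma in_color_nodes g c u :
  In u (color_nodes g c) <-> (u < length (cols g))%nat /\ nth u (cols g) 0%nat = c.
Proof. unfold color_nodes, nodes. rewrite filter_In, in_seq, Nat.eqb_eq. lia. Qed.

Lemma color_nodes_sub g c u : In u (color_nodes g c) -> In u (nodes g).
Proof. unfold color_nodes. rewrite filter_In. tauto. Qed.

Lemma seed_nodes_neq_nil g : wf_graph g -> seed_nodes g <> [].
Proof.
  intros [[s Hs] [Hc _]] H. assert (H0 : In 0%nat (seed_nodes g)).
  { unfold seed_nodes, nodes. rewrite filter_In, in_seq, Hs. simpl.
    destruct (cols g); [congruence | simpl; split; [lia | auto]]. }
  rewrite H in H0; destruct H0.
Qed.

Definition new_color_graph (g : graph) (us : list nat) : graph :=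
  mkGraph (cols g ++ [ncol g]) (seeds g ++ [true])
          (edges g ++ map (fun w => (length (cols g), w)) us) (S (ncol g)).

Definition old_color_graph (g : graph) (c : nat) (us : list nat) : graph :=
  mkGraph (cols g ++ [c]) (seeds g ++ [false])
          (edges g ++ map (fun w => (length (cols g), w)) us) (ncol g).

Lemma step_support a d i g q g' : In (q, g') (step a d i g) ->
  (exists u us, g' = new_color_graph g (u :: us)) \/
  (exists c us, (c < ncol g)%nat /\ g' = old_color_graph g c us).
Proof.
  unfold step. intros H. apply in_dbind in H as (q1 & b & r1 & _ & H & _). destruct b.
  - apply in_dbind in H as (q2 & u & r2 & _ & H & _).
    apply in_dbind in H as (q3 & us & r3 & _ & H & _). apply in_dret in H.
    left. now exists u, us.
  - apply in_dbind in H as (q2 & c & r2 & Hc & H & _).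
    apply in_dbind in H as (q3 & us & r3 & _ & H & _). apply in_dret in H.
    right. exists c, us. split; [|exact H].
    apply in_duniform, in_seq in Hc. lia.
Qed.

Lemma degree_app g cs ss E n u :
  (degree g u <= degree (mkGraph cs ss (edges g ++ E) n) u)%nat.
Proof. unfold degree; simpl. rewrite filter_app, length_app. lia. Qed.

Lemma color_nodes_app g x ss E n c u : In u (color_nodes g c) ->
  In u (color_nodes (mkGraph (cols g ++ [x]) ss E n) c).
Proof.
  rewrite !in_color_nodes; simpl. rewrite length_app; simpl. intros [H1 H2].
  split; [lia|]. now rewrite app_nth1.
Qed.

Lemma wf_step a d i g q g' : wf_graph g -> In (q, g') (step a d i g) -> wf_graph g'.
Proof.
  intros [[s Hs] [Hc [Hn [Hcn Hcol]]]] H.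
  apply step_support in H as [(u & us & ->) | (c & us & Hc' & ->)].
  - unfold new_color_graph. split; [exists (s ++ [true]); simpl; now rewrite Hs|].
    split; [simpl; destruct (cols g); [congruence | discriminate]|].
    split; [simpl; lia|]. split.
    + simpl. intros c Hc2. destruct (Nat.eq_dec c (ncol g)) as [->|Hne].
      * exists (length (cols g)). split.
        -- rewrite in_color_nodes; simpl. rewrite length_app; simpl. split; [lia|].
           rewrite app_nth2 by lia. now rewrite Nat.sub_diag.
        -- unfold degree; simpl. rewrite filter_app, length_app. simpl.
           rewrite Nat.eqb_refl. simpl. lia.
      * destruct (Hcn c ltac:(lia)) as [w [Hw Hd]]. exists w. split.
        -- apply (color_nodes_app g (ncol g) _ _ _ c w Hw).
        -- eapply Nat.lt_le_trans; [exact Hd | apply degree_app].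
    + simpl. intros x. rewrite in_app_iff, Hcol. simpl. lia.
  - unfold old_color_graph. split; [exists (s ++ [false]); simpl; now rewrite Hs|].
    split; [simpl; destruct (cols g); [congruence | discriminate]|].
    split; [simpl; lia|]. split.
    + simpl. intros c0 Hc2. destruct (Hcn c0 Hc2) as [w [Hw Hd]]. exists w. split.
      * apply (color_nodes_app g c _ _ _ c0 w Hw).
      * eapply Nat.lt_le_trans; [exact Hd | apply degree_app].
    + simpl. intros x. rewrite in_app_iff, Hcol. simpl. lia.
Qed.

Lemma expect_step_ncol a d i g (F : nat -> R) : wf_graph g ->
  expect (step a d i g) (fun g' => F (ncol g')) =
  p_new a i * F (S (ncol g)) + (1 - p_new a i) * F (ncol g).
Proof.
  intros Hg. pose proof Hg as [_ [_ [Hn [Hcn _]]]]. unfold step.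
  rewrite expect_dbind. unfold dflip, expect at 1. cbn [fold_right fst snd].
  rewrite !expect_dbind.
  rewrite (eq_expect _ _ (fun _ => F (S (ncol g)))).
  2:{ intros p u _. rewrite expect_dbind.
      rewrite (eq_expect _ _ (fun _ => F (S (ncol g)))) by (intros; now rewrite expect_dret).
      rewrite expect_const, mass_dreplicate; [ring|].
      now apply mass_duniform, seed_nodes_neq_nil. }
  rewrite (eq_expect (duniform (seq 0 (ncol g))) _ (fun _ => F (ncol g))).
  2:{ intros p c Hc. rewrite expect_dbind.
      rewrite (eq_expect _ _ (fun _ => F (ncol g))) by (intros; now rewrite expect_dret).
      rewrite expect_const, mass_dreplicate; [ring|].
      apply in_duniform, in_seq in Hc.
      destruct (Hcn c ltac:(lia)) as [u [Hu Hd]].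
      apply mass_dweighted. eapply weight_sum_neq0; eauto. }
  rewrite !expect_const, mass_duniform by (destruct (ncol g); [lia | discriminate]).
  rewrite mass_dweighted; [ring|].
  destruct (Hcn 0%nat Hn) as [u [Hu Hd]].
  eapply weight_sum_neq0; [eapply color_nodes_sub|]; eauto.
Qed.

(* The law of the list [X_{m+2}; ...; X_3; X_2] of colour counts: X_2 = 2 and X_i adds an
   independent Bernoulli(p i) to X_{i-1}. *)
Fixpoint count_chain (p : nat -> R) (m : nat) : Defs.dist (list nat) :=
  match m with
  | O => dret [2%nat]
  | S m' => dbind (count_chain p m') (fun l => dbind (dflip (p (m' + 3)%nat)) (fun b =>
             dret ((if b then S (hd 2%nat l) else hd 2%nat l) :: l)))
  end.

Lemma run_support a d m q h : In (q, h) (run a d m) ->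
  Forall wf_graph h /\ exists g t, h = g :: t.
Proof.
  revert q h; induction m as [|m IH]; intros q h H; cbn [run] in H.
  - apply in_dret in H; subst. split; [constructor; [apply wf_G2 | constructor] | eauto].
  - apply in_dbind in H as (q1 & h1 & r & H1 & H2 & _).
    destruct (IH _ _ H1) as [HF [g [t ->]]].
    apply in_dbind in H2 as (q2 & g' & r2 & H3 & H4 & _). apply in_dret in H4; subst.
    split; [|eauto]. constructor; auto. inversion HF; subst. eapply wf_step; eauto.
Qed.

Lemma expect_run_map_ncol a d m (F : list nat -> R) :
  expect (run a d m) (fun h => F (map ncol h)) = expect (count_chain (p_new a) m) F.
Proof.
  revert F; induction m as [|m IH]; intros F; cbn [run count_chain].
  - now rewrite !expect_dret.
  - rewrite !expect_dbind.
    set (G := fun l => p_new a (m + 3) * F (S (hd 2%nat l) :: l)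
                       + (1 - p_new a (m + 3)) * F (hd 2%nat l :: l)).
    rewrite (eq_expect (run a d m) _ (fun h => G (map ncol h))).
    + rewrite IH. apply eq_expect. intros p l _. rewrite expect_dbind.
      unfold dflip, expect at 1. cbn [fold_right fst snd]. rewrite !expect_dret.
      unfold G. ring.
    + intros p h Hh. destruct (run_support _ _ _ _ _ Hh) as [HF [g [t ->]]].
      inversion HF; subst. rewrite expect_dbind.
      rewrite (eq_expect _ _ (fun g' => F (ncol g' :: map ncol (g :: t))))
        by (intros; now rewrite expect_dret).
      now rewrite (expect_step_ncol a d (m + 3) g (fun c => F (c :: map ncol (g :: t)))).
Qed.

Definition in_window (a : R) (t : nat) (x : R) : bool :=
  andb (Rleb (INR t / (2 * Rpower (ln (INR t)) a)) x)
       (Rleb x (2 * INR t / Rpower (ln (INR t)) a)).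

Definition count_event (a : R) (n : nat) (l : list nat) : bool :=
  forallb (fun t => orb (negb (Rleb (Rpower (ln (INR n)) (a + 1)) (INR t)))
                        (in_window a t (INR (nth (n - t) l 2%nat))))
          (seq 2 (n - 1)).

Lemma ncolors_nth h k : Forall wf_graph h -> ncolors (nth k h G2) = nth k (map ncol h) 2%nat.
Proof.
  revert k; induction h as [|g h IH]; intros k HF; [now destruct k|].
  inversion HF; subst. destruct k; simpl; [now apply ncolors_wf | now apply IH].
Qed.

Lemma dprob_history_count_chain a d n :
  dprob (history a d n) (color_bound_event a n)
  = dprob (count_chain (p_new a) (n - 2)) (count_event a n).
Proof.
  rewrite !dprob_expect. unfold history. rewrite <- (expect_run_map_ncol a d).
  apply eq_expect. intros q h Hh. destruct (run_support _ _ _ _ _ Hh) as [HF _].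
  unfold color_bound_event, count_event, G_at.
  erewrite eq_forallb; [reflexivity|]. intros t. now rewrite ncolors_nth.
Qed.

(** * Moments of the colour count *)

Section Moments.

Variable p : nat -> R.
Hypothesis p_prob : forall i, (3 <= i)%nat -> 0 <= p i <= 1.

Lemma count_chain_nonneg m : nonneg (count_chain p m).
Proof.
  induction m as [|m IH]; cbn [count_chain]; [apply nonneg_dret|].
  apply nonneg_dbind; auto. intros. apply nonneg_dbind; [apply nonneg_dflip, p_prob; lia|].
  intros; apply nonneg_dret.
Qed.

Lemma expect_count_chain_S m F : expect (count_chain p (S m)) F =
  expect (count_chain p m) (fun l => p (m + 3)%nat * F (S (hd 2%nat l) :: l)
                                   + (1 - p (m + 3)%nat) * F (hd 2%nat l :: l)).
Proof.
  cbn [count_chain]. rewrite expect_dbind. apply eq_expect. intros q l _.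
  rewrite expect_dbind. unfold dflip, expect at 1. cbn [fold_right fst snd].
  rewrite !expect_dret. ring.
Qed.

Lemma count_chain_mass m : mass (count_chain p m) = 1.
Proof.
  induction m as [|m IH]; [apply mass_dret|]. unfold mass in *.
  rewrite expect_count_chain_S, (eq_expect _ _ (fun _ => 1)); [exact IH|]. intros; ring.
Qed.

Lemma expect_count_chain_nth j k F :
  expect (count_chain p (j + k)) (fun l => F (nth k l 2%nat))
  = expect (count_chain p j) (fun l => F (hd 2%nat l)).
Proof.
  revert F; induction k as [|k IH]; intros F.
  - rewrite Nat.add_0_r. apply eq_expect. intros q l _. now destruct l.
  - rewrite Nat.add_succ_r, expect_count_chain_S, <- IH.
    apply eq_expect. intros q l _. simpl. ring.
Qed.

Definition count (l : list nat) : R := INR (hd 2%nat l).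

Fixpoint mean (j : nat) : R :=
  match j with O => 2 | S j' => mean j' + p (j' + 3)%nat end.

Fixpoint var (j : nat) : R :=
  match j with O => 0 | S j' => var j' + p (j' + 3)%nat * (1 - p (j' + 3)%nat) end.

Lemma mean_ge2 j : 2 <= mean j.
Proof. induction j; simpl; [lra|]. pose proof (p_prob (j + 3)%nat ltac:(lia)). lra. Qed.

Lemma var_nonneg j : 0 <= var j.
Proof. induction j; simpl; [lra|]. pose proof (p_prob (j + 3)%nat ltac:(lia)). nra. Qed.

Lemma var_le_mean j : var j <= mean j.
Proof. induction j; simpl; [lra|]. pose proof (p_prob (j + 3)%nat ltac:(lia)). nra. Qed.

Lemma expect_centered j : expect (count_chain p j) (fun l => count l - mean j) = 0.
Proof.
  induction j as [|j IH]; [cbn [count_chain]; rewrite expect_dret; unfold count; simpl; ring|].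
  rewrite expect_count_chain_S, <- IH. apply eq_expect. intros q l _.
  unfold count; simpl hd. rewrite S_INR. simpl mean. ring.
Qed.

Lemma expect_centered_sq j : expect (count_chain p j) (fun l => (count l - mean j) ^ 2) = var j.
Proof.
  induction j as [|j IH]; [cbn [count_chain]; rewrite expect_dret; unfold count; simpl; ring|].
  rewrite expect_count_chain_S. simpl var. rewrite <- IH.
  set (q := p (j + 3)%nat).
  rewrite (eq_expect _ _ (fun l => (count l - mean j) ^ 2 + q * (1 - q))).
  - rewrite expect_add, expect_const, count_chain_mass. ring.
  - intros r l _. unfold count; simpl hd. rewrite S_INR. simpl mean. fold q. ring.
Qed.

(* With v_i = q_i (1 - q_i), the fourth central moment of a sum of independent
   Bernoulli(q_i) is sum_i v_i (1 - 3 v_i) + 3 (V^2 - sum_i v_i^2) <= V + 3 V^2. *)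
Lemma expect_centered_pow4_le j :
  expect (count_chain p j) (fun l => (count l - mean j) ^ 4) <= 3 * var j ^ 2 + var j.
Proof.
  induction j as [|j IH]; [cbn [count_chain]; rewrite expect_dret; unfold count; simpl; lra|].
  rewrite expect_count_chain_S. simpl var. set (q := p (j + 3)%nat).
  assert (Hq : 0 <= q <= 1) by (apply p_prob; lia).
  set (r := q * (1 - q) ^ 3 - (1 - q) * q ^ 3).
  set (s := q * (1 - q) ^ 4 + (1 - q) * q ^ 4).
  rewrite (eq_expect _ _ (fun l => (count l - mean j) ^ 4
             + (6 * (q * (1 - q)) * (count l - mean j) ^ 2
                + (4 * r * (count l - mean j) + s * 1)))).
  2:{ intros x l _. unfold count; simpl hd. rewrite S_INR. simpl mean. fold q. unfold r, s. ring. }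
  rewrite !expect_add, !expect_scal, expect_centered, expect_centered_sq.
  fold (mass (count_chain p j)). rewrite count_chain_mass.
  assert (Hs : s <= q * (1 - q)).
  { replace s with (q * (1 - q) * (1 - 3 * (q * (1 - q)))) by (unfold s; ring).
    assert (0 <= q * (1 - q)) by nra. nra. }
  pose proof (var_nonneg j). set (w := q * (1 - q)) in *.
  assert (0 <= w * w) by apply Rle_0_sqr. nra.
Qed.

Lemma quarter_deviation_prob_le j :
  dprob (count_chain p j) (fun l => Rleb (mean j / 4) (Rabs (count l - mean j)))
  <= 1024 / mean j ^ 2.
Proof.
  pose proof (mean_ge2 j). pose proof (var_le_mean j). pose proof (var_nonneg j).
  eapply Rle_trans; [apply markov_pow4; [apply count_chain_nonneg | lra]|].
  apply Rle_trans with (4 * mean j ^ 2 / (mean j / 4) ^ 4).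
  - unfold Rdiv. apply Rmult_le_compat_r; [left; apply Rinv_0_lt_compat, pow_lt; lra|].
    eapply Rle_trans; [apply expect_centered_pow4_le | nra].
  - right. field. lra.
Qed.

End Moments.

Lemma ln_le x y : 0 < x -> x <= y -> ln x <= ln y.
Proof. intros Hx [H|H]; [left; now apply ln_increasing | subst; lra]. Qed.

Lemma exp_le x y : x <= y -> exp x <= exp y.
Proof. intros [H|H]; [left; now apply exp_increasing | subst; lra]. Qed.

Lemma one_le_ln x : 3 <= x -> 1 <= ln x.
Proof.
  intros H. rewrite <- (ln_exp 1). apply ln_le; [apply exp_pos|].
  pose proof exp_le_3. lra.
Qed.

Lemma ln_le_sub1 x : 0 < x -> ln x <= x - 1.
Proof. intros Hx. pose proof (exp_ineq1_le (ln x)) as Hexp. rewrite exp_ln in Hexp; lra. Qed.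

Lemma ln_div x y : 0 < x -> 0 < y -> ln (x / y) = ln x - ln y.
Proof.
  intros. unfold Rdiv. rewrite ln_mult, ln_Rinv; try lra.
  now apply Rinv_0_lt_compat.
Qed.

Lemma exp_le_1_add_2x x : 0 <= x <= / 2 -> exp x <= 1 + 2 * x.
Proof.
  intros Hx. pose proof (exp_ineq1_le (- x)) as Hexp. rewrite exp_Ropp in Hexp.
  assert (0 < exp x) by apply exp_pos.
  assert (Hinv : exp x * (1 - x) <= 1).
  { apply (Rmult_le_reg_l (/ exp x)); [now apply Rinv_0_lt_compat|].
    rewrite <- Rmult_assoc, Rinv_l, Rmult_1_r by lra. lra. }
  nra.
Qed.

Lemma ln_ln_succ_sub_le t : 3 <= t ->
  0 <= ln (ln (t + 1)) - ln (ln t) <= / (t * ln t).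
Proof.
  intros Ht. pose proof (one_le_ln t Ht).
  assert (ln t <= ln (t + 1)) by (apply ln_le; lra).
  assert (Hdiff : ln (t + 1) - ln t <= / t).
  { rewrite <- ln_div by lra.
    pose proof (ln_le_sub1 ((t + 1) / t) ltac:(apply Rdiv_lt_0_compat; lra)) as Hln.
    replace ((t + 1) / t - 1) with (/ t) in Hln by (field; lra). exact Hln. }
  split; [pose proof (ln_le (ln t) (ln (t + 1)) ltac:(lra) ltac:(lra)); lra|].
  rewrite <- ln_div by lra.
  eapply Rle_trans; [apply ln_le_sub1, Rdiv_lt_0_compat; lra|].
  replace (ln (t + 1) / ln t - 1) with ((ln (t + 1) - ln t) / ln t) by (field; lra).
  rewrite Rinv_mult. unfold Rdiv.
  apply Rmult_le_compat_r; [left; apply Rinv_0_lt_compat; lra | exact Hdiff].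
Qed.

(* [p_new a i] is [rate a (INR i)] by conversion. *)
Definition rate (a x : R) : R := Rpower (ln x) (- a).

Lemma rate_in_unit a x : 0 < a -> 3 <= x -> 0 < rate a x <= 1.
Proof.
  intros Ha Hx. unfold rate, Rpower. split; [apply exp_pos|].
  rewrite <- exp_0. apply exp_le. pose proof (one_le_ln x Hx).
  assert (0 <= ln (ln x)) by (rewrite <- ln_1; apply ln_le; lra). nra.
Qed.

Lemma rate_antitone a x y : 0 < a -> 3 <= x -> x <= y -> rate a y <= rate a x.
Proof.
  intros Ha Hx Hy. unfold rate, Rpower. apply exp_le.
  pose proof (one_le_ln x Hx). assert (ln x <= ln y) by (apply ln_le; lra).
  assert (ln (ln x) <= ln (ln y)) by (apply ln_le; lra). nra.
Qed.

Lemma rate_le_succ a t : 1 < a -> 3 <= t -> 6 * a <= ln t ->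
  rate a t <= rate a (t + 1) * (1 + / (3 * t)).
Proof.
  intros Ha Ht Hl. set (x := a * (ln (ln (t + 1)) - ln (ln t))).
  assert (E : rate a t = rate a (t + 1) * exp x).
  { unfold rate, Rpower, x. rewrite <- exp_plus. f_equal. ring. }
  destruct (ln_ln_succ_sub_le t Ht) as [Hpos Hle].
  assert (Hx : 0 <= x <= / (6 * t)).
  { split; [unfold x; nra|].
    apply Rle_trans with (a * / (t * (6 * a))).
    - apply Rmult_le_compat_l; [lra|]. eapply Rle_trans; [exact Hle|].
      apply Rinv_le_contravar; [nra|]. apply Rmult_le_compat_l; lra.
    - right. field. lra. }
  assert (/ (6 * t) <= / 18) by (apply Rinv_le_contravar; lra).
  rewrite E. apply Rmult_le_compat_l; [left; apply rate_in_unit; lra|].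
  eapply Rle_trans; [apply exp_le_1_add_2x; lra|].
  replace (/ (3 * t)) with (2 * / (6 * t)) by (field; lra). lra.
Qed.

Lemma Rpower_ln_le_sqrt c x : 0 < c -> 3 <= x -> Rpower (ln x) c <= Rpower (2 * c) c * sqrt x.
Proof.
  intros Hc Hx. set (y := Rpower x (/ (2 * c))).
  assert (Hy : 0 < y) by apply exp_pos.
  assert (Hly : ln x = 2 * c * ln y) by (unfold y; rewrite ln_Rpower; field; lra).
  pose proof (ln_le_sub1 y Hy). pose proof (one_le_ln x Hx).
  apply Rle_trans with (Rpower (2 * c * y) c).
  - apply Rle_Rpower_l; nra.
  - rewrite <- Rpower_mult_distr by lra. apply Rmult_le_compat_l; [left; apply exp_pos|].
    unfold y. rewrite Rpower_mult. replace (/ (2 * c) * c) with (/ 2) by (field; lra).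
    rewrite Rpower_sqrt by lra. lra.
Qed.

Lemma three_le_INR i : (3 <= i)%nat -> 3 <= INR i.
Proof. intros H. replace 3 with (INR 3) by (simpl; ring). now apply le_INR. Qed.

Lemma nat_unbounded (x : R) : exists n : nat, x <= INR n.
Proof. destruct (INR_archimed 1 x) as [n Hn]; [lra|]. exists n. lra. Qed.

Section Target.

Variable a : R.
Hypothesis Ha : 1 < a.

Definition target (t : nat) : R := INR t * p_new a t.

Lemma p_new_prob i : (3 <= i)%nat -> 0 <= p_new a i <= 1.
Proof.
  intros H. change (p_new a i) with (rate a (INR i)).
  pose proof (rate_in_unit a (INR i) ltac:(lra) (three_le_INR i H)). lra.
Qed.

Lemma target_le_mean j : (1 <= j)%nat -> target (j + 2) <= mean (p_new a) j.
Proof.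
  unfold target. induction j as [|j IH]; intros Hj; [lia|].
  pose proof (p_new_prob (j + 3) ltac:(lia)). simpl mean.
  destruct (Nat.eq_dec j 0) as [->|Hj0]; [simpl in *; lra|].
  specialize (IH ltac:(lia)).
  assert (p_new a (S j + 2) <= p_new a (j + 2)).
  { apply rate_antitone; [lra | apply three_le_INR; lia | apply le_INR; lia]. }
  replace (S j + 2)%nat with (j + 3)%nat in * by lia.
  rewrite (plus_INR j 3), (plus_INR j 2) in *. simpl (INR 3) in *. simpl (INR 2) in *.
  pose proof (pos_INR j). nra.
Qed.

(* Once log t >= 6a, the target grows by at least (2/3) p_{t+1} per step while the mean grows
   by exactly p_{t+1}. *)
Lemma mean_sub_target_antitone j0 : (1 <= j0)%nat -> exp (6 * a) <= INR (j0 + 2) ->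
  forall k, mean (p_new a) (j0 + k) - 3 / 2 * target (j0 + k + 2)
            <= mean (p_new a) j0 - 3 / 2 * target (j0 + 2).
Proof.
  intros Hj0 He k. unfold target. induction k as [|k IH]; [rewrite Nat.add_0_r; lra|].
  rewrite Nat.add_succ_r. simpl mean.
  set (t := INR (j0 + k + 2)).
  assert (Ht3 : 3 <= t) by (apply three_le_INR; lia).
  assert (Hl : 6 * a <= ln t).
  { rewrite <- (ln_exp (6 * a)). apply ln_le; [apply exp_pos|].
    eapply Rle_trans; [exact He | apply le_INR; lia]. }
  pose proof (rate_le_succ a t Ha Ht3 Hl) as Hs.
  replace (j0 + k + 3)%nat with (S (j0 + k) + 2)%nat by lia.
  replace (INR (S (j0 + k) + 2)) with (t + 1) by (unfold t; rewrite <- S_INR; f_equal; lia).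
  change (p_new a (S (j0 + k) + 2)) with (rate a (INR (S (j0 + k) + 2))).
  replace (INR (S (j0 + k) + 2)) with (t + 1) by (unfold t; rewrite <- S_INR; f_equal; lia).
  change (p_new a (j0 + k + 2)) with (rate a t) in IH. fold t in IH.
  assert (t * rate a t <= t * rate a (t + 1) + rate a (t + 1) / 3).
  { replace (t * rate a (t + 1) + rate a (t + 1) / 3)
      with (t * (rate a (t + 1) * (1 + / (3 * t)))) by (field; lra).
    apply Rmult_le_compat_l; lra. }
  lra.
Qed.

Lemma target_eq t : target t = INR t / Rpower (ln (INR t)) a.
Proof. unfold target, p_new. now rewrite Rpower_Ropp. Qed.

Lemma sqrt_le_target t : 3 <= INR t -> sqrt (INR t) / Rpower (2 * a) a <= target t.
Proof.
  intros Ht. rewrite target_eq.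
  pose proof (Rpower_ln_le_sqrt a (INR t) ltac:(lra) Ht).
  assert (0 < Rpower (ln (INR t)) a) by apply exp_pos.
  assert (0 < Rpower (2 * a) a) by apply exp_pos.
  assert (Hs : 0 < sqrt (INR t)) by (apply sqrt_lt_R0; lra).
  pose proof (sqrt_sqrt (INR t) ltac:(lra)).
  apply (Rmult_le_reg_r (Rpower (2 * a) a * Rpower (ln (INR t)) a)); [nra|].
  replace (sqrt (INR t) / Rpower (2 * a) a * (Rpower (2 * a) a * Rpower (ln (INR t)) a))
    with (sqrt (INR t) * Rpower (ln (INR t)) a) by (field; lra).
  replace (INR t / Rpower (ln (INR t)) a * (Rpower (2 * a) a * Rpower (ln (INR t)) a))
    with (sqrt (INR t) * (Rpower (2 * a) a * sqrt (INR t))) by (field_simplify; nra).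
  apply Rmult_le_compat_l; lra.
Qed.

Lemma inv_target_sq_le t : 3 <= INR t ->
  / target t ^ 2 <= Rpower (2 * (2 * a)) (2 * a) / (INR t * sqrt (INR t)).
Proof.
  intros Ht. rewrite target_eq.
  pose proof (Rpower_ln_le_sqrt (2 * a) (INR t) ltac:(lra) Ht) as Hl.
  replace (2 * a) with (a + a) in Hl at 1 by ring. rewrite Rpower_plus in Hl.
  set (K := Rpower (2 * (2 * a)) (2 * a)) in *. set (L := Rpower (ln (INR t)) a) in *.
  assert (0 < L) by apply exp_pos.
  assert (Hs : 0 < sqrt (INR t)) by (apply sqrt_lt_R0; lra).
  pose proof (sqrt_sqrt (INR t) ltac:(lra)).
  replace (/ (INR t / L) ^ 2) with (L * L / (INR t * INR t)) by (field; lra).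
  replace (K / (INR t * sqrt (INR t))) with (K * sqrt (INR t) / (INR t * INR t))
    by (field_simplify_eq; [nra | lra]).
  unfold Rdiv. apply Rmult_le_compat_r; [left; apply Rinv_0_lt_compat; nra | exact Hl].
Qed.

Lemma mean_near_target : exists T0, 3 <= T0 /\ forall t : nat, T0 <= INR t ->
  target t <= mean (p_new a) (t - 2) <= 8 / 5 * target t.
Proof.
  destruct (nat_unbounded (exp (6 * a))) as [m0 Hm0].
  set (j0 := S m0).
  assert (He : exp (6 * a) <= INR (j0 + 2)).
  { eapply Rle_trans; [exact Hm0 | apply le_INR; unfold j0; lia]. }
  set (m := mean (p_new a) j0). set (K1 := Rpower (2 * a) a).
  assert (Hj3 : 3 <= INR (j0 + 2)) by (apply three_le_INR; unfold j0; lia).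
  exists (Rmax (INR (j0 + 2)) ((10 * m * K1) ^ 2)). split.
  { eapply Rle_trans; [exact Hj3 | apply Rmax_l]. }
  intros t Ht. pose proof (Rmax_l (INR (j0 + 2)) ((10 * m * K1) ^ 2)).
  pose proof (Rmax_r (INR (j0 + 2)) ((10 * m * K1) ^ 2)).
  assert (Htj : (j0 + 2 <= t)%nat) by (apply INR_le; lra).
  assert (Ht3 : 3 <= INR t) by lra.
  split.
  { pose proof (target_le_mean (t - 2) ltac:(unfold j0 in *; lia)) as Hlow.
    now replace (t - 2 + 2)%nat with t in Hlow by lia. }
  pose proof (mean_sub_target_antitone j0 ltac:(unfold j0; lia) He (t - 2 - j0)) as Hup.
  replace (j0 + (t - 2 - j0))%nat with (t - 2)%nat in Hup by lia.
  replace (t - 2 + 2)%nat with t in Hup by lia.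
  assert (0 <= target (j0 + 2)).
  { apply Rmult_le_pos; [apply pos_INR | apply p_new_prob; unfold j0; lia]. }
  assert (HK1 : 0 < K1) by apply exp_pos.
  assert (0 < m) by (pose proof (mean_ge2 (p_new a) p_new_prob j0); unfold m; lra).
  assert (Hsq : 10 * m * K1 <= sqrt (INR t)).
  { rewrite <- (sqrt_pow2 (10 * m * K1)) by nra. apply sqrt_le_1_alt; lra. }
  pose proof (sqrt_le_target t Ht3) as Hst. fold K1 in Hst.
  assert (10 * m <= target t).
  { eapply Rle_trans; [|exact Hst]. apply (Rmult_le_reg_r K1); [exact HK1|].
    replace (sqrt (INR t) / K1 * K1) with (sqrt (INR t)) by (field; lra). exact Hsq. }
  fold m in Hup. lra.
Qed.

Lemma in_window_of_near_mean t mu x : 3 <= INR t ->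
  target t <= mu <= 8 / 5 * target t -> Rabs (x - mu) < mu / 4 -> in_window a t x = true.
Proof.
  intros Ht Hmu Hx. apply Rabs_def2 in Hx as [Hx1 Hx2].
  rewrite target_eq in Hmu. assert (0 < Rpower (ln (INR t)) a) by apply exp_pos.
  assert (0 < INR t / Rpower (ln (INR t)) a) by (apply Rdiv_lt_0_compat; lra).
  unfold in_window. apply andb_true_intro; split; apply Rleb_spec.
  - replace (INR t / (2 * Rpower (ln (INR t)) a)) with (INR t / Rpower (ln (INR t)) a / 2)
      by (field; lra). lra.
  - replace (2 * INR t / Rpower (ln (INR t)) a) with (2 * (INR t / Rpower (ln (INR t)) a))
      by (field; lra). lra.
Qed.

Lemma window_failure_prob_le : exists T0 K, 3 <= T0 /\ 0 <= K /\
  forall n t : nat, (2 <= t <= n)%nat -> T0 <= INR t ->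
  dprob (count_chain (p_new a) (n - 2)) (fun l => negb (in_window a t (INR (nth (n - t) l 2%nat))))
  <= K / (INR t * sqrt (INR t)).
Proof.
  destruct mean_near_target as [T0 [HT0 Hnear]].
  set (K := 1024 * Rpower (2 * (2 * a)) (2 * a)).
  assert (0 < Rpower (2 * (2 * a)) (2 * a)) by apply exp_pos.
  exists T0, K. split; [exact HT0|]. split; [unfold K; lra|].
  intros n t Htn Ht. specialize (Hnear t Ht).
  set (mu := mean (p_new a) (t - 2)) in *.
  rewrite !dprob_expect. replace (n - 2)%nat with ((t - 2) + (n - t))%nat by lia.
  rewrite (expect_count_chain_nth _ _ _ (fun x => if negb (in_window a t (INR x)) then 1 else 0)).
  rewrite <- (dprob_expect _ (fun l => negb (in_window a t (count l)))).
  assert (Hmu : 2 <= mu) by apply (mean_ge2 _ p_new_prob).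
  eapply Rle_trans; [apply (dprob_mono _ _ (fun l => Rleb (mu / 4) (Rabs (count l - mu))))|].
  - apply count_chain_nonneg, p_new_prob.
  - intros l Hl. apply Rleb_spec, Rnot_lt_le. intros Hlt.
    rewrite (in_window_of_near_mean t mu (count l)) in Hl;
      [discriminate | lra | exact Hnear | exact Hlt].
  - eapply Rle_trans; [apply quarter_deviation_prob_le, p_new_prob|]. fold mu.
    pose proof (inv_target_sq_le t ltac:(lra)).
    apply Rle_trans with (1024 * / target t ^ 2); [|unfold K, Rdiv in *; lra].
    unfold Rdiv. apply Rmult_le_compat_l; [lra|].
    apply Rinv_le_contravar; [apply pow_lt; lra | apply pow_incr; lra].
Qed.

End Target.

(** * Summing the failure probabilities *)

(* The tail sum over t >= T of t^{-3/2} telescopes against 2 / sqrt (max x (T - 1)). *)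
Definition inv_sqrt_clip (T x : R) : R := / sqrt (Rmax x (T - 1)).

Lemma inv_sqrt_clip_le T x : 1 < T -> inv_sqrt_clip T x <= / sqrt (T - 1).
Proof.
  intros HT. unfold inv_sqrt_clip. apply Rinv_le_contravar; [apply sqrt_lt_R0; lra|].
  apply sqrt_le_1_alt, Rmax_r.
Qed.

Lemma inv_sqrt_clip_nonneg T x : 1 < T -> 0 <= inv_sqrt_clip T x.
Proof.
  intros HT. unfold inv_sqrt_clip. left; apply Rinv_0_lt_compat, sqrt_lt_R0.
  pose proof (Rmax_r x (T - 1)). lra.
Qed.

Lemma tail_term_le T t : 1 < T ->
  (if Rleb T t then / (t * sqrt t) else 0) <= 2 * (inv_sqrt_clip T (t - 1) - inv_sqrt_clip T t).
Proof.
  intros HT. destruct (Rleb T t) eqn:E.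
  - apply Rleb_spec in E. unfold inv_sqrt_clip. rewrite !Rmax_left by lra.
    set (u := sqrt (t - 1)). set (v := sqrt t).
    assert (Hu : 0 < u) by (apply sqrt_lt_R0; lra).
    assert (Hv : 0 < v) by (apply sqrt_lt_R0; lra).
    assert (Hu2 : u * u = t - 1) by (apply sqrt_sqrt; lra).
    assert (Hv2 : v * v = t) by (apply sqrt_sqrt; lra).
    assert (Huv : u <= v) by (apply sqrt_le_1_alt; lra).
    replace t with (v * v) at 1 by exact Hv2.
    replace (2 * (/ u - / v)) with (/ (u * v * (u + v) / 2)) by (field_simplify_eq; nra).
    apply Rinv_le_contravar; [|nra]. assert (0 < u * v) by nra. nra.
  - assert (inv_sqrt_clip T (t - 1) = / sqrt (T - 1)).
    { unfold inv_sqrt_clip. rewrite Rmax_right; [reflexivity|].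
      assert (t < T); [|lra]. apply Rnot_le_lt. intros H. apply Rleb_spec in H. congruence. }
    pose proof (inv_sqrt_clip_le T t HT). lra.
Qed.

Lemma sumR_tail_le T s k : 1 < T ->
  sumR (fun t => if Rleb T (INR t) then / (INR t * sqrt (INR t)) else 0) (seq s k)
  <= 2 / sqrt (T - 1).
Proof.
  intros HT.
  assert (Htele : forall k s, sumR (fun t => 2 * (inv_sqrt_clip T (INR t - 1)
                                                  - inv_sqrt_clip T (INR t))) (seq s k)
                  = 2 * (inv_sqrt_clip T (INR s - 1) - inv_sqrt_clip T (INR (s + k) - 1))).
  { clear s k. induction k as [|k IH]; intros s; simpl.
    - rewrite Nat.add_0_r. ring.
    - unfold sumR in IH |- *. simpl. rewrite IH, S_INR.
      replace (s + S k)%nat with (S s + k)%nat by lia.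
      replace (INR s + 1 - 1) with (INR s) by ring. ring. }
  eapply Rle_trans; [apply sumR_le; intros t _; apply (tail_term_le T (INR t) HT)|].
  rewrite Htele. pose proof (inv_sqrt_clip_le T (INR s - 1) HT).
  pose proof (inv_sqrt_clip_nonneg T (INR (s + k) - 1) HT). unfold Rdiv. lra.
Qed.

Lemma count_event_prob_ge a : 1 < a -> exists T0 K, 3 <= T0 /\ 0 <= K /\
  forall n : nat, T0 <= Rpower (ln (INR n)) (a + 1) ->
  1 - K / sqrt (Rpower (ln (INR n)) (a + 1) - 1)
  <= dprob (count_chain (p_new a) (n - 2)) (count_event a n).
Proof.
  intros Ha. destruct (window_failure_prob_le a Ha) as [T0 [K [HT0 [HK Hfail]]]].
  exists T0, (2 * K). split; [exact HT0|]. split; [lra|].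
  intros n HT. unfold count_event. set (T1 := Rpower (ln (INR n)) (a + 1)) in *.
  eapply Rle_trans;
    [|apply union_bound; [apply count_chain_nonneg | apply count_chain_mass];
      apply p_new_prob; lra].
  set (m := count_chain (p_new a) (n - 2)).
  assert (Hsum : sumR (fun t => dprob m (fun l => negb (negb (Rleb T1 (INR t))
                          || in_window a t (INR (nth (n - t) l 2%nat))))) (seq 2 (n - 1))
                 <= sumR (fun t => K * (if Rleb T1 (INR t) then / (INR t * sqrt (INR t)) else 0))
                         (seq 2 (n - 1))).
  { apply sumR_le. intros t Ht. apply in_seq in Ht.
    destruct (Rleb T1 (INR t)) eqn:E; cbn [negb orb].
    - apply Rleb_spec in E. rewrite <- Rdiv_def. apply Hfail; [lia | lra].
    - rewrite dprob_false. lra. }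
  rewrite sumR_scal in Hsum. pose proof (sumR_tail_le T1 2 (n - 1) ltac:(lra)).
  assert (K * sumR (fun t => if Rleb T1 (INR t) then / (INR t * sqrt (INR t)) else 0)
            (seq 2 (n - 1)) <= K * (2 / sqrt (T1 - 1))) by (apply Rmult_le_compat_l; lra).
  replace (2 * K / sqrt (T1 - 1)) with (K * (2 / sqrt (T1 - 1))) by (unfold Rdiv; ring).
  lra.
Qed.

Lemma le_Rpower_ln a B n : 0 < a -> 1 <= B -> exp B <= INR n ->
  B <= Rpower (ln (INR n)) (a + 1).
Proof.
  intros Ha HB Hn. assert (0 < exp B) by apply exp_pos.
  assert (HBn : B <= ln (INR n)) by (rewrite <- (ln_exp B); apply ln_le; lra).
  eapply Rle_trans; [exact HBn|]. rewrite <- (Rpower_1 (ln (INR n))) at 1 by lra.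
  apply Rle_Rpower; lra.
Qed.

Lemma div_sqrt_sub1_le K eps T : 0 <= K -> 0 < eps -> 1 + (K / eps) ^ 2 <= T ->
  K / sqrt (T - 1) <= eps.
Proof.
  intros HK He HT.
  assert (Hq : 0 <= K / eps) by (apply Rmult_le_pos; [lra | left; now apply Rinv_0_lt_compat]).
  assert (Hs : K / eps <= sqrt (T - 1)).
  { rewrite <- (sqrt_pow2 (K / eps)) by exact Hq. apply sqrt_le_1_alt. lra. }
  destruct (Req_dec K 0) as [->|HK0].
  - unfold Rdiv; rewrite Rmult_0_l; lra.
  - assert (0 < sqrt (T - 1)) by (assert (0 < K / eps) by (apply Rdiv_lt_0_compat; lra); lra).
    apply (Rmult_le_reg_r (sqrt (T - 1))); [lra|].
    replace (K / sqrt (T - 1) * sqrt (T - 1)) with K by (field; lra).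
    apply (Rmult_le_compat_l eps) in Hs; [|lra].
    replace (eps * (K / eps)) with K in Hs by (field; lra). lra.
Qed.

Theorem lemma2 (a : R) (d : nat) (ha : 1 < a) (hd : (4 <= d)%nat) :
  forall eps : R, 0 < eps ->
  exists N : nat, forall n : nat, (N <= n)%nat ->
    1 - eps <= dprob (history a d n) (color_bound_event a n).
Proof.
  intros eps Heps.
  destruct (count_event_prob_ge a ha) as [T0 [K [HT0 [HK Hprob]]]].
  pose proof (Rmax_l T0 (1 + (K / eps) ^ 2)). pose proof (Rmax_r T0 (1 + (K / eps) ^ 2)).
  set (B := Rmax T0 (1 + (K / eps) ^ 2)) in *.
  destruct (nat_unbounded (exp B)) as [N HN].
  exists N. intros n Hn.
  assert (HB : B <= Rpower (ln (INR n)) (a + 1)).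
  { apply le_Rpower_ln; [lra | lra |]. eapply Rle_trans; [exact HN | now apply le_INR]. }
  rewrite dprob_history_count_chain.
  eapply Rle_trans; [|apply Hprob; lra].
  pose proof (div_sqrt_sub1_le K eps (Rpower (ln (INR n)) (a + 1)) HK Heps ltac:(lra)). lra.
Qed.
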